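(* Let $(F,t)\in U$ with $t\neq0$ and $Y=Y_{F,t}$. Then $\Gamma_1\cup\Gamma_2$ coincides with the locus in $F(Y)$ of lines on $Y$ passing through $p_0=[0,\dots,0,1]$.
   Context: $U=U_0\times\mathbb{A}^1$, where $U_0$ is the space of cubic forms $F(x_0,\dots,x_3)$ such that the curve cut out by $F$ on the quadric $x_0x_3=x_1x_2$ in $\mathbb{P}^3$ is smooth, avoids $[0,0,0,1]$, and is tangent with multiplicity $2$ to the lines $x_0=x_1=0$ and $x_0=x_2=0$. $Y_{F,t}\subset\mathbb{P}^5$ is $x_4^3-F(x_0,\dots,x_3)+x_5(x_0x_3-x_1x_2)+t\,x_0x_5^2=0$, and $F(Y)$ its Fano variety of lines. $C_i=(x_0=x_i=x_5=0)\cap(x_4^3=F)\subset\mathbb{P}^5$, $i=1,2$; for each $p\in C_i$ the line $\overline{p_0p}$ lies in $Y$, and $\Gamma_i\subset F(Y)$ denotes the image of the embedding $C_i\to F(Y)$, $p\mapsto\overline{p_0p}$. *)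

From HB Require Import structures.
From mathcomp Require Import all_boot all_order all_algebra.
From mathcomp Require Import mpoly.
Set Implicit Arguments. Unset Strict Implicit. Unset Printing Implicit Defensive.
Import Order.TTheory GRing.Theory Num.Theory.
Local Open Scope ring_scope.

Section Defs.
Variable K : closedFieldType.

Definition c4 (k : nat) : 'I_4 := inord k.
Definition c6 (k : nat) : 'I_6 := inord k.

Definition Qform : {mpoly K[4]} :=
  'X_(c4 0) * 'X_(c4 3) - 'X_(c4 1) * 'X_(c4 2).

Definition nonzero4 (x : 'I_4 -> K) := exists i, x i != 0.

Definition lin_indep4 (u w : 'I_4 -> K) :=
  forall a b : K, (forall i, a * u i + b * w i = 0) -> a = 0 /\ b = 0.

(* the curve {Q = F = 0} in P^3 is smooth: at each of its points the
   gradients of Q and F are linearly independent (Jacobian criterion) *)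
Definition smooth_QF (F : {mpoly K[4]}) :=
  forall x : 'I_4 -> K, nonzero4 x -> Qform.@[x] = 0 -> F.@[x] = 0 ->
    lin_indep4 (fun i => (Qform^`M(i)).@[x]) (fun i => (F^`M(i)).@[x]).

(* the restriction of F to the parametrised line s |-> p + s q, as a
   univariate polynomial in s *)
Definition restr (F : {mpoly K[4]}) (p q : 'I_4 -> K) : {poly K} :=
  mmap (@polyC K) (fun i => (p i)%:P + q i *: 'X) F.

Definition onL1 (x : 'I_4 -> K) := x (c4 0) = 0 /\ x (c4 1) = 0.
Definition onL2 (x : 'I_4 -> K) := x (c4 0) = 0 /\ x (c4 2) = 0.

(* the curve {Q = F = 0} is tangent with multiplicity 2 to the line L
   (contained in Q): F restricted to L has a zero of order exactly 2 at some
   point p of L (q is any second point spanning L with p) *)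
Definition tangent_mult2 (F : {mpoly K[4]}) (L : ('I_4 -> K) -> Prop) :=
  exists p q : 'I_4 -> K, [/\ L p, L q, lin_indep4 p q,
    restr F p q != 0 & mup 0 (restr F p q) = 2%N].

Definition e3 : 'I_4 -> K := fun i => if i == c4 3 then 1 else 0.

Definition inU0 (F : {mpoly K[4]}) :=
  [/\ F \is 3.-homog, smooth_QF F, F.@[e3] != 0,
      tangent_mult2 F onL1 & tangent_mult2 F onL2].

Definition proj4 (v : 'rV[K]_6) : 'I_4 -> K := fun i => v ord0 (@widen_ord 4 6 isT i).

Definition Yeq (F : {mpoly K[4]}) (t : K) (v : 'rV[K]_6) : K :=
  v ord0 (c6 4) ^+ 3 - F.@[proj4 v] + v ord0 (c6 5) * Qform.@[proj4 v]
  + t * v ord0 (c6 0) * v ord0 (c6 5) ^+ 2.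

Definition p0 : 'rV[K]_6 := \row_j (if j == c6 5 then 1 else 0).

Definition inC (F : {mpoly K[4]}) (i : nat) (v : 'rV[K]_6) :=
  [/\ v != 0, v ord0 (c6 0) = 0, v ord0 (c6 i) = 0, v ord0 (c6 5) = 0
    & v ord0 (c6 4) ^+ 3 = F.@[proj4 v]].

(* lines of P^5 are 2-dimensional row spaces of rank-2 2x6 matrices;
   a line lies in Y if every vector of it satisfies the equation of Y *)
Definition line_in_Y (F : {mpoly K[4]}) (t : K) (A : 'M[K]_(2, 6)) :=
  forall v : 'rV[K]_6, (v <= A)%MS -> Yeq F t v = 0.

End Defs.

(** Every rank-2 [A] whose row space contains [p0] is spanned by [p0]
    and a vector [v] with [v_5 = 0].  Along the line [p0 v] the equation of [Y]
    restricts to the binary cubic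
      [b^3 (v_4^3 - F(v)) + a b^2 Q(v) + t v_0 a^2 b],
    so the line lies in [Y] iff the three coefficients vanish; as [t != 0] and
    [Q(v) = v_0 v_3 - v_1 v_2] this says exactly [v_0 = 0], [v_1 v_2 = 0] and
    [v_4^3 = F(v)], i.e. [v] is a point of [C_1] or of [C_2]. *)

From HB Require Import structures.
From mathcomp Require Import all_boot all_order all_algebra.
From mathcomp Require Import mpoly.
From mathcomp Require Import ring.
Import Order.TTheory GRing.Theory Num.Theory.
Local Open Scope ring_scope.

Lemma meval_homogZ {R : comNzRingType} {n d : nat} {P : {mpoly R[n]}}
    (b : R) (x : 'I_n -> R) :
  P \is d.-homog -> P.@[fun i => b * x i] = b ^+ d * P.@[x].
Proof.
move=> /dhomogP homP; rewrite !mevalE big_distrr /=; apply: eq_big_seq => m mP.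
rewrite mulrCA; congr (_ * _).
under eq_bigr do rewrite exprMn.
rewrite big_split /=; congr (_ * _).
rewrite -(homP m mP) /= mdegE.
by rewrite (big_morph (fun k => b ^+ k) (@exprD R b) (expr0 b)).
Qed.

Lemma quadratic_coefs_eq0 {R : idomainType} {c0 c1 c2 : R} :
  2%:R != 0 :> R -> (forall a, c0 + a * c1 + c2 * a ^+ 2 = 0) ->
  [/\ c0 = 0, c1 = 0 & c2 = 0].
Proof.
move=> two_neq0 vanish.
have c0_eq0 : c0 = 0 by have := vanish 0; rewrite mul0r expr0n mulr0 !addr0.
have c2_eq0 : c2 = 0.
  suff /eqP : 2%:R * c2 = 0 by rewrite mulf_eq0 (negbTE two_neq0) => /eqP.
  have -> : 2%:R * c2 = (c0 + 1 * c1 + c2 * 1 ^+ 2)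
                      + (c0 + -1 * c1 + c2 * (-1) ^+ 2) - 2%:R * c0 by ring.
  by rewrite !vanish c0_eq0; ring.
by split=> //; have := vanish 1; rewrite c0_eq0 c2_eq0 mul1r mul0r add0r addr0.
Qed.

Section RankTwo.
Context {F : fieldType} {n : nat}.
Implicit Types (u v : 'rV[F]_n) (A : 'M[F]_(2, n)).

Lemma sub_col_mx_rVP u v (x : 'rV[F]_n) :
  reflect (exists a b, x = a *: u + b *: v) (x <= col_mx u v)%MS.
Proof.
apply: (iffP idP) => [xuv | [a [b ->]]]; last first.
  by rewrite -addsmxE addmx_sub_adds ?scalemx_sub.
move: xuv; rewrite -addsmxE => /sub_addsmxP [[c d] /= ->].
by exists (c 0 0), (d 0 0); rewrite {1}[c]mx11_scalar {1}[d]mx11_scalar !mul_scalar_mx.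
Qed.

Lemma eqmx_col_mx_rank2 A u v :
  \rank A = 2%N -> u != 0 -> (u <= A)%MS -> (v <= A)%MS -> ~~ (v <= u)%MS ->
  (A == col_mx u v)%MS.
Proof.
move=> rankA u_neq0 uA vA v_notin_u.
have uvA : (col_mx u v <= A)%MS by rewrite col_mx_sub uA vA.
have rank_uv : \rank (col_mx u v) = 2%N.
  apply/eqP; rewrite eqn_leq rank_leq_row /=.
  have u_uv : (u <= col_mx u v)%MS by rewrite -addsmxE addsmxSl.
  have /leqifP := mxrank_leqif_sup u_uv.
  by rewrite rank_rV u_neq0 col_mx_sub submx_refl (negbTE v_notin_u).
by rewrite uvA andbT -(mxrank_leqif_sup uvA).2 rank_uv rankA.
Qed.

Lemma rank2_eqmx_col_mx_coord0 {A u} {j : 'I_n} :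
  \rank A = 2%N -> u ord0 j = 1 -> (u <= A)%MS ->
  exists v, [/\ v ord0 j = 0, ~~ (v <= u)%MS & (A == col_mx u v)%MS].
Proof.
move=> rankA uj1 uA.
have u_neq0 : u != 0 by apply: contra_eq_neq uj1 => ->; rewrite mxE eq_sym oner_eq0.
have [i wi_notin_u] : exists i, ~~ (row i A <= u)%MS.
  apply/row_subPn; apply: contraTN isT => /mxrankS.
  by rewrite rankA rank_rV u_neq0.
set w := row i A; set v := w - w ord0 j *: u.
have w_eq : w = v + w ord0 j *: u by rewrite addrNK.
have v_notin_u : ~~ (v <= u)%MS.
  by apply: contra wi_notin_u; rewrite -/w w_eq => vu; rewrite addmx_sub ?scalemx_sub.
exists v; split=> //; first by rewrite !mxE uj1 mulr1 subrr.
apply: eqmx_col_mx_rank2 => //.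
by rewrite addmx_sub ?row_sub // eqmx_opp scalemx_sub.
Qed.

End RankTwo.

Section LinesThroughP0.
Context {K : closedFieldType}.
Implicit Types (F : {mpoly K[4]}) (t : K) (v : 'rV[K]_6).

Lemma c6_neq (i j : nat) : (i < 6)%N -> (j < 6)%N -> i != j -> c6 i != c6 j.
Proof.
move=> ilt jlt; apply: contra => /eqP/(congr1 (@nat_of_ord 6)).
by rewrite /c6 !inordK // => /eqP.
Qed.

Lemma proj4_c4 v (k : nat) : (k < 4)%N -> proj4 v (c4 k) = v ord0 (c6 k).
Proof.
move=> klt; congr (v _ _); apply: val_inj.
by rewrite /= !inordK // (leq_trans klt).
Qed.

Lemma widen_neq_c65 (i : 'I_4) : (widen_ord (isT : (4 <= 6)%N) i == c6 5) = false.
Proof.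
apply/negbTE/eqP => /(congr1 (@nat_of_ord 6)); rewrite /c6 inordK //= => iE.
by have := ltn_ord i; rewrite iE.
Qed.

Lemma QformE (x : 'I_4 -> K) :
  (Qform K).@[x] = x (c4 0) * x (c4 3) - x (c4 1) * x (c4 2).
Proof. by rewrite /Qform mevalB !mevalM !mevalXU. Qed.

Lemma Yeq_line F t v (a b : K) :
  F \is 3.-homog -> v ord0 (c6 5) = 0 ->
  Yeq F t (a *: p0 K + b *: v) =
  b ^+ 3 * (v ord0 (c6 4) ^+ 3 - F.@[proj4 v])
  + a * (b ^+ 2 * (Qform K).@[proj4 v]) + t * v ord0 (c6 0) * b * a ^+ 2.
Proof.
move=> homF v5.
have coordE j : (a *: p0 K + b *: v) ord0 j = a * (j == c6 5)%:R + b * v ord0 j.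
  by rewrite !mxE; case: eqP.
have proj4E (G : {mpoly K[4]}) :
    G.@[proj4 (a *: p0 K + b *: v)] = G.@[fun i => b * proj4 v i].
  by apply: meval_eq => i; rewrite /proj4 coordE widen_neq_c65 mulr0 add0r.
rewrite /Yeq !proj4E (meval_homogZ _ _ homF) !QformE !coordE v5 eqxx.
by rewrite !(negbTE (@c6_neq _ 5 _ _ _)) //=; ring.
Qed.

Lemma line_in_Y_sub {F t} {A B : 'M[K]_(2, 6)} :
  (A <= B)%MS -> line_in_Y F t B -> line_in_Y F t A.
Proof. by move=> AB YB x xA; apply/YB/(submx_trans xA). Qed.

Lemma line_in_Y_p0P {F t v} :
  [pchar K] =i pred0 -> t != 0 -> F \is 3.-homog -> v ord0 (c6 5) = 0 ->
  line_in_Y F t (col_mx (p0 K) v) <->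
  [/\ v ord0 (c6 0) = 0, v ord0 (c6 1) * v ord0 (c6 2) = 0
    & v ord0 (c6 4) ^+ 3 = F.@[proj4 v]].
Proof.
move=> charK0 t_neq0 homF v5.
split=> [onY | [v0 v12 v4]]; last first.
  move=> x /sub_col_mx_rVP [a [b ->]].
  by rewrite Yeq_line // v4 subrr QformE !proj4_c4 // v0 v12; ring.
have two_neq0 : 2%:R != 0 :> K by move/pcharf0P: charK0 => ->.
have on_line a : v ord0 (c6 4) ^+ 3 - F.@[proj4 v] + a * (Qform K).@[proj4 v]
                  + t * v ord0 (c6 0) * a ^+ 2 = 0.
  have := Yeq_line F t v a 1 homF v5; rewrite !expr1n !mul1r mulr1 => <-.
  by apply/onY/sub_col_mx_rVP; exists a, 1.
have [c0_eq0 Q_eq0 tv0_eq0] := quadratic_coefs_eq0 two_neq0 on_line.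
have v0 : v ord0 (c6 0) = 0.
  by apply/eqP; move/eqP: tv0_eq0; rewrite mulf_eq0 (negbTE t_neq0).
split=> //; last by apply/eqP; rewrite -subr_eq0 c0_eq0.
by move/eqP: Q_eq0; rewrite QformE !proj4_c4 // v0 mul0r sub0r oppr_eq0 => /eqP.
Qed.

End LinesThroughP0.

Theorem lemma5p4 (K : closedFieldType) (hK : [pchar K] =i pred0)
    (F : {mpoly K[4]}) (t : K) (hF : inU0 F) (ht : t != 0)
    (A : 'M[K]_(2, 6)) (hA : \rank A = 2%N) :
  (line_in_Y F t A /\ (p0 K <= A)%MS) <->
  (exists2 i : nat, (i == 1%N) || (i == 2%N) &
     exists2 p : 'rV[K]_6, inC F i p & (A == col_mx (p0 K) p)%MS).
Proof.
have [homF _ _ _ _] := hF.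
have p05 : p0 K ord0 (c6 5) = 1 by rewrite mxE eqxx.
split=> [[onY p0A] | [i i12 [p [_ p_c0 p_ci p_c5 p_c4] /andP [A_p p_A]]]].
- have [v [v5 v_notin_p0 /andP [A_v v_A]]] := rank2_eqmx_col_mx_coord0 hA p05 p0A.
  have [v0 v12 v4] := (line_in_Y_p0P hK ht homF v5).1 (line_in_Y_sub v_A onY).
  have v_neq0 : v != 0 by apply: contraNneq v_notin_p0 => ->; rewrite sub0mx.
  have inCv i : v ord0 (c6 i) = 0 -> inC F i v by [].
  have eqA : (A == col_mx (p0 K) v)%MS by rewrite A_v v_A.
  move/eqP: v12; rewrite mulf_eq0 => /orP [/eqP v1 | /eqP v2].
  + by exists 1%N => //; exists v => //; apply: inCv.
  + by exists 2%N => //; exists v => //; apply: inCv.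
- split; last by apply: submx_trans p_A; rewrite -addsmxE addsmxSl.
  apply: line_in_Y_sub A_p _; apply/(line_in_Y_p0P hK ht homF p_c5).
  by split=> //; case/orP: i12 => /eqP iE; subst i; rewrite p_ci (mul0r, mulr0).
Qed.
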